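(* Let $K$ be a complete non-archimedean field, $R$ a Banach $K$-algebra, and $R_0\subseteq R_1\subseteq\cdots$ a nested collection of complete subrings of $R$ such that $\bigcup_hR_h$ is dense in $R$. Let $s_1,\dots,s_N\in R\langle\theta_1,\dots,\theta_n\rangle$. For every $\varepsilon>0$ there exist an integer $h$ and elements $\tilde s_1,\dots,\tilde s_N\in R_h\langle\theta_1,\dots,\theta_n\rangle$ such that: (1) $|s_\alpha-\tilde s_\alpha|<\varepsilon$ for each $\alpha$; (2) for all $\alpha,\beta\in\{1,\dots,N\}$ and $k\in\{1,\dots,n\}$ with $s_\alpha|_{\theta_k=0}=s_\beta|_{\theta_k=0}$ one has $\tilde s_\alpha|_{\theta_k=0}=\tilde s_\beta|_{\theta_k=0}$; (3) for all $\alpha,\beta$ and $k$ with $s_\alpha|_{\theta_k=1}=s_\beta|_{\theta_k=1}$ one has $\tilde s_\alpha|_{\theta_k=1}=\tilde s_\beta|_{\theta_k=1}$; (4) for every $\alpha$, if $s_\alpha|_{\theta_1=1}\in R_{h'}\langle\theta_1,\dots,\theta_n\rangle$ for some $h'$, then $\tilde s_\alpha|_{\theta_1=1}=s_\alpha|_{\theta_1=1}$.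
   Context: $R\langle\theta_1,\dots,\theta_n\rangle$ is the ring of strictly convergent power series over $R$ with the Gauss norm $|\sum a_I\theta^I|=\max_I\|a_I\|$, and $R_h\langle\theta\rangle$ is the corresponding subring. $s|_{\theta_k=\epsilon}$ denotes the image of $s$ under the substitution $\theta_k=\epsilon$. *)

From HB Require Import structures.
From mathcomp Require Import all_boot all_order all_algebra.
From mathcomp Require Import classical_sets reals.
From Stdlib Require Import ClassicalEpsilon.
Set Implicit Arguments. Unset Strict Implicit. Unset Printing Implicit Defensive.
Import Order.TTheory GRing.Theory Num.Theory.
Local Open Scope ring_scope.
Local Open Scope classical_set_scope.

Section Defs.
Variable Rr : realType.

Definition cauchy_seq (V : zmodType) (nrm : V -> Rr) (u : nat -> V) : Prop :=
  forall eps : Rr, 0 < eps -> exists M : nat,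
    forall m p : nat, (M <= m)%N -> (M <= p)%N -> nrm (u m - u p) < eps.

Definition converges_to (V : zmodType) (nrm : V -> Rr) (u : nat -> V) (l : V) : Prop :=
  forall eps : Rr, 0 < eps -> exists M : nat,
    forall m : nat, (M <= m)%N -> nrm (u m - l) < eps.

Definition complete_wrt (V : zmodType) (nrm : V -> Rr) : Prop :=
  forall u : nat -> V, cauchy_seq nrm u -> exists l, converges_to nrm u l.

Definition nonarch_complete_field (K : fieldType) (absK : K -> Rr) : Prop :=
  [/\ forall x, 0 <= absK x,
      forall x, absK x = 0 <-> x = 0,
      forall x y, absK (x * y) = absK x * absK y,
      forall x y, absK (x + y) <= Num.max (absK x) (absK y)
    & complete_wrt absK].

Definition banach_algebra (K : fieldType) (absK : K -> Rr) (R : algType K)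
    (normR : R -> Rr) : Prop :=
  (forall x, 0 <= normR x) /\
  [/\ forall x, normR x = 0 <-> x = 0,
      forall x y, normR (x + y) <= Num.max (normR x) (normR y),
      forall x y, normR (x * y) <= normR x * normR y,
      forall (c : K) x, normR (c *: x) = absK c * normR x
    & complete_wrt normR].

Definition complete_subring (R : nzRingType) (normR : R -> Rr) (P : {pred R}) : Prop :=
  [/\ 1 \in P,
      forall x y, x \in P -> y \in P -> x - y \in P,
      forall x y, x \in P -> y \in P -> x * y \in P
    & forall u : nat -> R, (forall m, u m \in P) -> cauchy_seq normR u ->
        exists2 l, l \in P & converges_to normR u l].

Definition nested (R : Type) (Rsub : nat -> {pred R}) : Prop :=
  forall h : nat, {subset Rsub h <= Rsub h.+1}.

Definition dense_union (R : zmodType) (normR : R -> Rr) (Rsub : nat -> {pred R}) : Prop :=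
  forall (x : R) (eps : Rr), 0 < eps -> exists h : nat, exists2 y, y \in Rsub h & normR (x - y) < eps.

(* multi-indices I = (I_1,...,I_n); theta^I = prod_k theta_k^(I_k) *)
Definition mindex (n : nat) := {ffun 'I_n -> nat}.
Definition mdeg (n : nat) (I : mindex n) : nat := (\sum_(k < n) I k)%N.

(* a power series sum_I a_I theta^I is represented by its coefficient function a *)
Definition strictly_convergent (R : zmodType) (normR : R -> Rr) (n : nat)
    (a : mindex n -> R) : Prop :=
  forall eps : Rr, 0 < eps -> exists M : nat,
    forall I : mindex n, (M <= mdeg I)%N -> normR (a I) < eps.

(* membership in R<theta>, resp. in the subring R_h<theta> (P = R_h) *)
Definition in_tate (R : zmodType) (normR : R -> Rr) (P : {pred R}) (n : nat)
    (a : mindex n -> R) : Prop :=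
  strictly_convergent normR a /\ forall I, a I \in P.

Definition gauss_norm (R : zmodType) (normR : R -> Rr) (n : nat) (a : mindex n -> R) : Rr :=
  sup [set normR (a I) | I in [set: mindex n]].

Definition mupd (n : nat) (I : mindex n) (k : 'I_n) (j : nat) : mindex n :=
  [ffun i => if i == k then j else I i].

Definition series_sum (R : zmodType) (normR : R -> Rr) (u : nat -> R) : R :=
  epsilon (inhabits 0) (fun l => converges_to normR (fun m => \sum_(j < m) u j) l).

Definition subst0 (R : zmodType) (n : nat) (k : 'I_n) (a : mindex n -> R) : mindex n -> R :=
  fun I => if I k == 0%N then a I else 0.

Definition subst1 (R : zmodType) (normR : R -> Rr) (n : nat) (k : 'I_n)
    (a : mindex n -> R) : mindex n -> R :=
  fun I => if I k == 0%N then series_sum normR (fun j => a (mupd I k j)) else 0.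

End Defs.

(* In one variable θ, expand a power series in the basis
   1 - θ, θ, θ^2 - θ, θ^3 - θ^2, ... : the coordinates of sum_j a_j θ^j are
   a_0, sum_j a_j and the tails sum_(j >= m) a_j (m >= 2), and conversely each
   coefficient is a difference of at most three coordinates.  All basis vectors
   but the first vanish at θ = 0, and all but the second at θ = 1, so in the
   coordinates taken with respect to every variable the substitutions
   θ_k = 0 and θ_k = 1 just copy one coordinate and erase the others.  Hence
   approximating each coordinate separately by an element of R_h -- keeping it
   if it already lies in R_h and replacing it by 0 if it is small -- commutes
   with all these substitutions.  Going back to coefficients only takes
   differences, which keeps the result in R_h<θ> and, by the ultrametric
   inequality, ε-close to s; finitely many coordinates are not small, so one
   level h serves for all of them. *)

From mathcomp Require Import all_boot all_order all_algebra.
From mathcomp Require Import boolp classical_sets reals zify.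
From Stdlib Require Import ClassicalEpsilon.
Set Implicit Arguments. Unset Strict Implicit. Unset Printing Implicit Defensive.
Import Order.TTheory GRing.Theory Num.Theory.
Local Open Scope ring_scope.

Section MultiIndex.
Variable n : nat.
Implicit Types (I : mindex n) (k l : 'I_n).

Lemma mupd_at I k j : mupd I k j k = j.
Proof. by rewrite /mupd ffunE eqxx. Qed.

Lemma mupd_ne I k l j : l != k -> mupd I k j l = I l.
Proof. by move=> lk; rewrite /mupd ffunE (negbTE lk). Qed.

Lemma mupd_id I k : mupd I k (I k) = I.
Proof. by apply/ffunP => i; rewrite /mupd ffunE; case: eqP => // ->. Qed.

Lemma mupd_mupd I k j j' : mupd (mupd I k j) k j' = mupd I k j'.
Proof. by apply/ffunP => i; rewrite /mupd !ffunE; case: eqP. Qed.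

Lemma mupdC I k l j j' : k != l ->
  mupd (mupd I k j) l j' = mupd (mupd I l j') k j.
Proof.
move=> kl; apply/ffunP => i; rewrite /mupd !ffunE.
by case: (eqVneq i l) => // ->; rewrite eq_sym (negbTE kl).
Qed.

Lemma mdeg_mupd I k j : (mdeg (mupd I k j) + I k = mdeg I + j)%N.
Proof.
rewrite /mdeg (bigD1 k) //= [in RHS](bigD1 k) //= mupd_at.
by under eq_bigr => i ik do rewrite mupd_ne //; lia.
Qed.

Lemma leq_mdeg I k : (I k <= mdeg I)%N.
Proof. by rewrite /mdeg (bigD1 k) //= leq_addr. Qed.

Lemma leq_mdeg2 I k l : k != l -> (I k + I l <= mdeg I)%N.
Proof.
move=> kl; rewrite /mdeg (bigD1 k) //= leq_add2l (bigD1 l) 1?eq_sym //=.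
exact: leq_addr.
Qed.

End MultiIndex.

Definition ultrametric_norm (Rr : realType) (V : zmodType) (nrm : V -> Rr) :=
  [/\ forall x, 0 <= nrm x, forall x, nrm x = 0 <-> x = 0,
      forall x, nrm (- x) = nrm x
    & forall x y, nrm (x + y) <= Num.max (nrm x) (nrm y)].

Section Ultrametric.
Variables (Rr : realType) (V : zmodType) (nrm : V -> Rr).
Hypothesis nrmU : ultrametric_norm nrm.
Local Notation series_sum := (series_sum nrm).
Local Notation dec := (strictly_convergent nrm).

Lemma nrm0 : nrm 0 = 0.
Proof. by case: nrmU => _ /(_ 0) [_ ->]. Qed.

Lemma nrmN x : nrm (- x) = nrm x.
Proof. by case: nrmU. Qed.

Lemma nrmD_lt x y e : nrm x < e -> nrm y < e -> nrm (x + y) < e.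
Proof.
case: nrmU => _ _ _ nrmD xe ye.
by apply: le_lt_trans (nrmD x y) _; rewrite gt_max xe ye.
Qed.

Lemma nrmB_lt x y e : nrm x < e -> nrm y < e -> nrm (x - y) < e.
Proof. by move=> xe ye; apply: nrmD_lt; rewrite ?nrmN. Qed.

Lemma nrm_sum_lt (I : Type) (r : seq I) (P : pred I) (F : I -> V) e :
  0 < e -> (forall i, P i -> nrm (F i) < e) -> nrm (\sum_(i <- r | P i) F i) < e.
Proof.
move=> e_gt0 Fe; elim/big_rec: _ => [|i x Pi xe]; first by rewrite nrm0.
exact: nrmD_lt (Fe i Pi) xe.
Qed.

Lemma strictly_convergentB n (a b : mindex n -> V) :
  dec a -> dec b -> dec (fun I => a I - b I).
Proof.
move=> a0 b0 e e_gt0; have [Ma aM] := a0 e e_gt0; have [Mb bM] := b0 e e_gt0.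
exists (maxn Ma Mb) => I; rewrite geq_max => /andP[MaI MbI].
exact: nrmB_lt (aM _ MaI) (bM _ MbI).
Qed.

Lemma converges_to_unique (u : nat -> V) l1 l2 :
  converges_to nrm u l1 -> converges_to nrm u l2 -> l1 = l2.
Proof.
case: nrmU => nrm_ge0 nrm_eq0 _ _ ul1 ul2; apply/eqP; rewrite -subr_eq0.
apply/eqP/nrm_eq0/eqP; rewrite eq_le nrm_ge0 andbT leNgt; apply/negP => d_gt0.
have [M1 M1l] := ul1 _ d_gt0; have [M2 M2l] := ul2 _ d_gt0.
have := nrmB_lt (M2l _ (leq_maxr M1 M2)) (M1l _ (leq_maxl M1 M2)).
by rewrite opprB addrC addrA subrK ltxx.
Qed.

Definition null_seq (u : nat -> V) :=
  forall e, 0 < e -> exists M, forall m, (M <= m)%N -> nrm (u m) < e.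

Definition null2 (b : nat -> nat -> V) :=
  forall e, 0 < e -> exists M, forall i j, (M <= i + j)%N -> nrm (b i j) < e.

Definition partial_sum (u : nat -> V) (m : nat) : V := \sum_(j < m) u j.

Definition series_closed (P : {pred V}) :=
  [/\ 0 \in P, forall x y, x \in P -> y \in P -> x - y \in P
    & forall u, null_seq u -> (forall j, u j \in P) -> series_sum u \in P].

Lemma null_seq_shift u c : null_seq u -> null_seq (fun j => u (j + c)%N).
Proof.
move=> u0 e e_gt0; have [M uM] := u0 e e_gt0.
by exists M => m Mm; apply: uM; apply: leq_trans Mm (leq_addr _ _).
Qed.

Lemma null2_row b i : null2 b -> null_seq (b i).
Proof.
move=> b0 e e_gt0; have [M bM] := b0 e e_gt0.
by exists M => j Mj; apply: bM; apply: leq_trans Mj (leq_addl _ _).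
Qed.

Lemma null2_col b j : null2 b -> null_seq (fun i => b i j).
Proof.
move=> b0 e e_gt0; have [M bM] := b0 e e_gt0.
by exists M => i Mi; apply: bM; apply: leq_trans Mi (leq_addr _ _).
Qed.

Lemma null2_shift b c : null2 b -> null2 (fun i j => b i (j + c)%N).
Proof.
move=> b0 e e_gt0; have [M bM] := b0 e e_gt0.
by exists M => i j Mij; apply: bM; rewrite addnA; apply: leq_trans Mij (leq_addr _ _).
Qed.

Lemma partial_sum_cat u m p : (m <= p)%N ->
  partial_sum u p = partial_sum u m + \sum_(m <= j < p) u j.
Proof. by move=> mp; rewrite /partial_sum -!(big_mkord xpredT) -big_cat_nat. Qed.

Lemma null_seq_cauchy u : null_seq u -> cauchy_seq nrm (partial_sum u).
Proof.
move=> u0 e e_gt0; have [M uM] := u0 e e_gt0.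
suff ordered m p : (M <= m <= p)%N -> nrm (partial_sum u m - partial_sum u p) < e.
  exists M => m p Mm Mp; case: (leqP m p) => [mp|/ltnW pm].
    by apply: ordered; rewrite Mm.
  by rewrite -nrmN opprB; apply: ordered; rewrite Mp.
case/andP=> Mm mp; rewrite (partial_sum_cat u mp) opprD addrA subrr add0r nrmN.
rewrite big_nat_cond; apply: nrm_sum_lt => // j /andP[/andP[mj _] _].
exact/uM/(leq_trans Mm).
Qed.

Lemma series_sum_eq u l : converges_to nrm (partial_sum u) l -> series_sum u = l.
Proof.
move=> ul; apply: (converges_to_unique _ ul).
by apply: (epsilon_spec (inhabits 0)); exists l.
Qed.

Lemma complete_subgroup_series_closed (P : {pred V}) : 0 \in P ->
  (forall x y, x \in P -> y \in P -> x - y \in P) ->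
  (forall u, (forall m, u m \in P) -> cauchy_seq nrm u ->
     exists2 l, l \in P & converges_to nrm u l) ->
  series_closed P.
Proof.
move=> P0 PB P_complete; split=> // u u0 uP.
have PD x y : x \in P -> y \in P -> x + y \in P.
  move=> xP yP; have -> : x + y = x - (0 - y) by rewrite sub0r opprK.
  by apply: (PB) => //; apply: (PB).
have sumP m : partial_sum u m \in P.
  by rewrite /partial_sum; elim/big_rec: _ => // j x _; apply: PD.
have [l lP ul] := P_complete _ sumP (null_seq_cauchy u0).
by rewrite (series_sum_eq ul).
Qed.

Lemma series_sum_delta u : (forall j, j != 0%N -> u j = 0) -> series_sum u = u 0%N.
Proof.
move=> u_delta; apply: series_sum_eq => e e_gt0; exists 1%N => m m_gt0.
rewrite (partial_sum_cat u m_gt0) big_nat_cond big1 => [|j /andP[/andP[j_gt0 _] _]].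
  by rewrite /partial_sum big_ord1 addr0 subrr nrm0.
by apply: u_delta; rewrite -lt0n.
Qed.

Lemma series_sum_eq0 u : (forall j, u j = 0) -> series_sum u = 0.
Proof. by move=> u0; rewrite series_sum_delta. Qed.

Lemma series_sum_telescope d :
  null_seq d -> series_sum (fun j => d j - d j.+1) = d 0%N.
Proof.
move=> d0; apply: series_sum_eq => e e_gt0; have [M dM] := d0 e e_gt0.
exists M => m Mm; have -> : partial_sum (fun j => d j - d j.+1) m = d 0%N - d m.
  rewrite /partial_sum -(big_mkord xpredT (fun j => d j - d j.+1)) -[LHS]opprK -sumrN.
  by under eq_bigr do rewrite opprB; rewrite telescope_sumr // opprB.
by rewrite addrAC subrr add0r nrmN dM.
Qed.

Hypothesis nrm_complete : complete_wrt nrm.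

Lemma series_sumP u : null_seq u -> converges_to nrm (partial_sum u) (series_sum u).
Proof.
move=> u0; have [l ul] := nrm_complete (null_seq_cauchy u0).
by rewrite (series_sum_eq ul).
Qed.

Lemma series_closed_ball e : 0 < e -> series_closed [pred x | nrm x < e].
Proof.
move=> e_gt0; split=> [|x y|u u0 ue]; rewrite ?inE ?nrm0 //; first exact: nrmB_lt.
have [M uM] := series_sumP u0 e_gt0.
rewrite -[series_sum _](subKr (partial_sum u M)) nrmB_lt ?uM //.
by apply: nrm_sum_lt => // j _; apply: ue.
Qed.

Lemma series_sum_split u p : null_seq u ->
  series_sum u = \sum_(j < p) u j + series_sum (fun j => u (j + p)%N).
Proof.
move=> u0; apply: series_sum_eq => e e_gt0.
have [M uM] := series_sumP (null_seq_shift p u0) e_gt0.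
exists (M + p)%N => m Mm; have pm : (p <= m)%N := leq_trans (leq_addl M p) Mm.
rewrite (partial_sum_cat u pm); have := big_addn 0 m p xpredT u; rewrite add0n => ->.
rewrite opprD addrACA subrr add0r.
by rewrite big_mkord uM // leq_subRL // addnC.
Qed.

Lemma series_sum_exchange b : null2 b ->
  series_sum (fun i => series_sum (b i)) =
  series_sum (fun j => series_sum (fun i => b i j)).
Proof.
move=> b0; set col := fun j => series_sum (fun i => b i j).
have col0 : null_seq col.
  move=> e e_gt0; have [M bM] := b0 e e_gt0.
  have [_ _ ball_sum] := series_closed_ball e_gt0.
  exists M => j Mj; apply: ball_sum; first exact: null2_col.
  by move=> i; rewrite inE bM // (leq_trans Mj) // leq_addl.
apply: series_sum_eq => e e_gt0; have [M bM] := b0 e e_gt0.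
have [_ _ ball_sum] := series_closed_ball e_gt0.
have [Mc colM] := series_sumP col0 e_gt0; exists (maxn M Mc) => p; rewrite geq_max.
case/andP=> Mp Mcp; rewrite -[_ - series_sum _](subrKA (partial_sum col p)).
apply: nrmD_lt; last exact: colM.
(* Split every row and column at [p]: what remains are sums of tails whose
   terms all have [i + j >= p]. *)
rewrite /partial_sum /col.
under eq_bigr do rewrite (series_sum_split p (null2_row _ b0)).
under [X in _ - X]eq_bigr do rewrite (series_sum_split p (null2_col _ b0)).
rewrite !big_split /= [X in _ - (X + _)]exchange_big opprD addrACA subrr add0r.
apply: nrmB_lt; apply: nrm_sum_lt => // i _; apply: ball_sum => [|j].
- exact: null2_row (null2_shift _ b0).
- by rewrite inE bM // addnA (leq_trans Mp) ?leq_addl.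
- exact: null_seq_shift (null2_col _ b0).
- by rewrite inE bM // addnAC (leq_trans Mp) ?leq_addl.
Qed.

Lemma subrACA (x y z t : V) : (x - y) - (z - t) = (x - z) - (y - t).
Proof. by rewrite !opprD !opprK addrACA. Qed.

(** * One variable: a basis adapted to the substitutions θ = 0 and θ = 1 *)

(* [tails u] are the coordinates of [sum_j u_j θ^j] in the basis
   [1 - θ, θ, θ^2 - θ, θ^3 - θ^2, ...], and [diffs] is the inverse change. *)
Definition tail_from (m : nat) : nat := if m == 1%N then 0%N else m.

Definition tails (u : nat -> V) (m : nat) : V :=
  if m == 0%N then u 0%N else series_sum (fun j => u (j + tail_from m)%N).

Definition diffs (u : nat -> V) (m : nat) : V :=
  if m == 0%N then u 0%N
  else if m == 1%N then u 1%N - u 0%N - u 2%N else u m - u m.+1.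

Definition select (p : pred nat) (c : nat) (u : nat -> V) (m : nat) : V :=
  if p m then u c else 0.

Definition at_zero := select (pred1 0%N) 0%N.

Definition at_one (u : nat -> V) (m : nat) : V :=
  if m == 0%N then series_sum u else 0.

(* A constant [b = b (1 - θ) + b θ] has coordinates [b, b, 0, 0, ...]. *)
Definition const_coord (c : nat) := select (fun m => m <= 1)%N c.

Lemma tails1 u : tails u 1%N = series_sum u.
Proof. by rewrite /tails /=; under eq_fun do rewrite addn0. Qed.

Lemma tails1_split u : null_seq u -> tails u 1%N = u 0%N + u 1%N + tails u 2%N.
Proof.
move=> u0; rewrite tails1 (series_sum_split 2 u0).
by rewrite !big_ord_recl big_ord0 addr0.
Qed.

Lemma tailsSS u m : null_seq u -> tails u m.+2 = u m.+2 + tails u m.+3.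
Proof.
move=> u0; rewrite /tails /= (series_sum_split 1 (null_seq_shift _ u0)).
rewrite big_ord1 add0n; congr (_ + series_sum _); apply: funext => j.
by rewrite addn1 addSnnS.
Qed.

Lemma diffs_tails u : null_seq u -> diffs (tails u) = u.
Proof.
move=> u0; apply: funext => -[|[|m]] //.
  by rewrite /diffs /= tails1_split // [tails u 0]/tails /= addrAC addrK addrC addKr.
by rewrite /diffs /= tailsSS // addrK.
Qed.

Lemma null_seq_diffs u : null_seq u -> null_seq (diffs u).
Proof.
move=> u0 e e_gt0; have [M uM] := u0 e e_gt0.
exists M.+2 => -[|[|m]] // Mm; rewrite /diffs /=.
by apply: nrmB_lt; apply: uM; lia.
Qed.

Lemma tails_diffsSS u m : null_seq u -> tails (diffs u) m.+2 = u m.+2.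
Proof.
move=> u0; rewrite /tails /= -(series_sum_telescope (null_seq_shift m.+2 u0)).
by congr series_sum; apply: funext => j; rewrite !addnS /diffs /= addSn.
Qed.

Lemma tails_diffs u : null_seq u -> tails (diffs u) = u.
Proof.
move=> u0; apply: funext => -[|[|m]] //; last exact: tails_diffsSS.
have d0 := null_seq_diffs u0.
by rewrite tails1_split // tails_diffsSS // /diffs /= addrA subrK addrC subrK.
Qed.

Lemma tails_at_zero u : tails (at_zero u) = const_coord 0%N (tails u).
Proof.
apply: funext => -[|[|m]] //; rewrite /const_coord /select /=.
  by rewrite tails1 series_sum_delta // => -[].
by rewrite /tails /= series_sum_eq0 // => j; rewrite addnS.
Qed.

Lemma tails_at_one u : tails (at_one u) = const_coord 1%N (tails u).
Proof.
apply: funext => -[|[|m]]; rewrite /const_coord /select /=.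
- by rewrite tails1.
- by rewrite !tails1 series_sum_delta // => -[].
- by rewrite /tails /= series_sum_eq0 // => j; rewrite addnS.
Qed.

Lemma diffsB u v m : diffs (fun j => u j - v j) m = diffs u m - diffs v m.
Proof.
rewrite /diffs; case: ifP => // _; case: ifP => _; last exact: subrACA.
by rewrite (subrACA (u 1%N)) (subrACA (u 1%N - u 0%N)).
Qed.

(* Allowing [j = m - 1] loses at most one degree of the multi-index, which is
   harmless for strict convergence. *)
Definition tail_local (f : (nat -> V) -> nat -> V) :=
  forall P, series_closed P -> forall u m, null_seq u ->
    (forall j, (m.-1 <= j)%N -> u j \in P) -> f u m \in P.

Lemma tails_local : tail_local tails.
Proof.
move=> P [_ _ P_sum] u [|m] u0 uP; first exact: uP.
apply: P_sum => [|j]; first exact: null_seq_shift.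
by apply: uP; rewrite /tail_from; case: m => //= m; lia.
Qed.

Lemma diffs_local : tail_local diffs.
Proof.
move=> P [_ PB _] u [|[|m]] _ uP; rewrite /diffs /=; first exact: uP.
  by do 2?apply: (PB); apply: (uP).
by apply: (PB); apply: (uP); lia.
Qed.

Lemma select_local (p : pred nat) c :
  (forall m, p m -> (m.-1 <= c)%N) -> tail_local (select p c).
Proof.
move=> pc P [P0 _ _] u m _ uP; rewrite /select.
by case: ifP => // /pc; apply: uP.
Qed.

Lemma at_one_local : tail_local at_one.
Proof. by move=> P [P0 _ P_sum] u [|m] u0 uP //; apply: P_sum => // j; apply: uP. Qed.

Definition commute_on (f g : (nat -> V) -> nat -> V) (b : nat -> nat -> V) :=
  forall m m', f (fun j => g (fun i => b i j) m) m' = g (fun i => f (b i) m') m.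

Lemma select_commute f (p : pred nat) c b :
  (forall m, f (fun=> 0) m = 0) -> commute_on f (select p c) b.
Proof. by move=> f0 m m'; rewrite /select; case: (p m). Qed.

Lemma tails0 m : tails (fun=> 0) m = 0.
Proof. by rewrite /tails; case: ifP => // _; rewrite series_sum_eq0. Qed.

Lemma tails_at_one_commute b : null2 b -> commute_on tails at_one b.
Proof.
move=> b0 [|m] m'; rewrite /at_one /=; last exact: tails0.
case: m' => [|m']; rewrite /tails //=.
by rewrite (series_sum_exchange (null2_shift _ b0)).
Qed.

(** * Several variables *)

Section Along.
Variable n : nat.
Implicit Types (k l : 'I_n) (I J : mindex n) (a d : mindex n -> V).

Definition along k (f : (nat -> V) -> nat -> V) a : mindex n -> V :=
  fun I => f (fun j => a (mupd I k j)) (I k).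

Lemma along_comp k f g a : along k f (along k g a) = along k (fun u => f (g u)) a.
Proof.
apply: funext => I; rewrite /along; congr f; apply: funext => j.
by rewrite mupd_at; congr g; apply: funext => i; rewrite mupd_mupd.
Qed.

Lemma along_id k a : along k id a = a.
Proof. by apply: funext => I; rewrite /along mupd_id. Qed.

Lemma null_seq_slice k a I : dec a -> null_seq (fun j => a (mupd I k j)).
Proof.
move=> a0 e e_gt0; have [M aM] := a0 e e_gt0; exists M => j Mj; apply: aM.
by rewrite (leq_trans _ (leq_mdeg _ k)) // mupd_at.
Qed.

Lemma null2_slice k l a I : k != l -> dec a ->
  null2 (fun i j => a (mupd (mupd I k i) l j)).
Proof.
move=> kl a0 e e_gt0; have [M aM] := a0 e e_gt0; exists M => i j Mij; apply: aM.
by rewrite (leq_trans _ (leq_mdeg2 _ kl)) // mupd_ne // !mupd_at.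
Qed.

Lemma along_eq k f g a : dec a -> (forall u, null_seq u -> f u = g u) ->
  along k f a = along k g a.
Proof.
by move=> a0 fg; apply: funext => I; rewrite /along fg //; apply: null_seq_slice.
Qed.

Lemma alongC k l f g a : k != l ->
  (forall I, commute_on f g (fun i j => a (mupd (mupd I k i) l j))) ->
  along l f (along k g a) = along k g (along l f a).
Proof.
move=> kl fg; apply: funext => I; rewrite /along.
have lk : l != k by rewrite eq_sym.
transitivity (f (fun j => g (fun i => a (mupd (mupd I k i) l j)) (I k)) (I l)).
  congr f; apply: funext => j; rewrite mupd_ne //.
  by congr g; apply: funext => i; rewrite mupdC.
by rewrite fg; congr g; apply: funext => i; rewrite mupd_ne.
Qed.

Lemma along_mem k f P a : tail_local f -> series_closed P -> dec a ->
  (forall J, a J \in P) -> forall I, along k f a I \in P.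
Proof. by move=> f_loc P_closed a0 aP I; apply: f_loc => //; apply: null_seq_slice. Qed.

Lemma dec_along k f a : tail_local f -> dec a -> dec (along k f a).
Proof.
move=> f_loc a0 e e_gt0; have [M aM] := a0 e e_gt0; exists M.+1 => I MI.
apply: f_loc (series_closed_ball e_gt0) _ _ (null_seq_slice _ _ a0) _ => j kj.
by rewrite inE aM //; have := mdeg_mupd I k j; lia.
Qed.

Lemma along_select_map k (p : pred nat) c (phi : V -> V) a : phi 0 = 0 ->
  along k (select p c) (fun J => phi (a J)) =
  (fun I => phi (along k (select p c) a I)).
Proof. by move=> phi0; apply: funext => I; rewrite /along /select; case: ifP. Qed.

Lemma along_diffsB k a d :
  along k diffs (fun J => a J - d J) =
  (fun I => along k diffs a I - along k diffs d I).
Proof. by apply: funext => I; rewrite /along diffsB. Qed.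

Lemma subst0E k a : subst0 k a = along k at_zero a.
Proof.
apply: funext => I; rewrite /subst0 /along /at_zero /select /=.
by case: eqP => // Ik0; rewrite -Ik0 mupd_id.
Qed.

Lemma subst1E k a : subst1 nrm k a = along k at_one a.
Proof. by []. Qed.

End Along.

Section Coordinates.
Variable n : nat.
Implicit Types (k l : 'I_n) (ks : seq 'I_n) (a d : mindex n -> V).

Definition coords ks a : mindex n -> V :=
  foldl (fun a k => along k tails a) a ks.

Definition uncoords ks d : mindex n -> V :=
  foldr (fun k d => along k diffs d) d ks.

Lemma dec_coords ks a : dec a -> dec (coords ks a).
Proof. by elim: ks a => [|k ks IH] a a0 //=; apply/IH/dec_along/a0/tails_local. Qed.

Lemma dec_uncoords ks d : dec d -> dec (uncoords ks d).
Proof. by elim: ks => [|k ks IH] d0 //=; apply/dec_along/IH/d0/diffs_local. Qed.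

Lemma coords_mem ks P a : series_closed P -> dec a -> (forall J, a J \in P) ->
  forall I, coords ks a I \in P.
Proof.
move=> P_closed; elim: ks a => [|k ks IH] a a0 aP //=.
apply: IH; first exact: dec_along tails_local a0.
exact: along_mem tails_local _ a0 _.
Qed.

Lemma uncoords_mem ks P d : series_closed P -> dec d -> (forall J, d J \in P) ->
  forall I, uncoords ks d I \in P.
Proof.
move=> P_closed d0 dP; elim: ks => [|k ks IH] //=.
by apply: along_mem diffs_local _ (dec_uncoords _ d0) IH.
Qed.

Lemma uncoords_coords ks a : dec a -> uncoords ks (coords ks a) = a.
Proof.
elim: ks a => [|k ks IH] a a0 //=.
rewrite IH; last exact: dec_along tails_local a0.
by rewrite along_comp (along_eq _ a0 diffs_tails) along_id.
Qed.

Lemma coords_uncoords ks d : dec d -> coords ks (uncoords ks d) = d.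
Proof.
elim: ks => [|k ks IH] d0 //=.
by rewrite along_comp (along_eq _ (dec_uncoords _ d0) tails_diffs) along_id IH.
Qed.

Lemma uncoordsB ks d d' :
  uncoords ks (fun J => d J - d' J) =
  (fun I => uncoords ks d I - uncoords ks d' I).
Proof. by elim: ks => [|k ks IH] //=; rewrite IH along_diffsB. Qed.

Lemma coords_select ks k (p : pred nat) c a : k \notin ks ->
  coords ks (along k (select p c) a) = along k (select p c) (coords ks a).
Proof.
elim: ks a => [|l ks IH] a //=; rewrite inE negb_or => /andP[kl kks].
by rewrite alongC // => [|I]; [apply: IH | apply: select_commute tails0].
Qed.

Section Substitution.
Variables (k : 'I_n) (X : (nat -> V) -> nat -> V) (c : nat).
Hypotheses (X_local : tail_local X)
  (tails_X : forall u, tails (X u) = const_coord c (tails u))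
  (X_tails : forall l a, l != k -> dec a ->
     along l tails (along k X a) = along k X (along l tails a)).

Lemma coords_subst ks a : uniq ks -> k \in ks -> dec a ->
  coords ks (along k X a) = along k (const_coord c) (coords ks a).
Proof.
elim: ks a => [|l ks IH] a //= /andP[lks uks]; rewrite inE => kks a0.
have [kl|kl] := eqVneq k l.
  rewrite -kl in lks *.
  by rewrite along_comp (funext tails_X) -along_comp; apply: coords_select.
have {}kks : k \in ks by rewrite (negbTE kl) in kks.
rewrite X_tails 1?eq_sym // IH //; exact: dec_along tails_local a0.
Qed.

Lemma uncoords_subst ks d : uniq ks -> k \in ks -> dec d ->
  uncoords ks (along k (const_coord c) d) = along k X (uncoords ks d).
Proof.
move=> uks kks d0; have d'0 := dec_uncoords ks d0.
rewrite -{1}(coords_uncoords ks d0) -coords_subst // uncoords_coords //.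
exact: dec_along X_local d'0.
Qed.

End Substitution.

End Coordinates.

(** * Approximating the coordinates *)

Section Approximation.
Variables (n : nat) (P : {pred V}) (del : Rr).
Hypotheses (P_closed : series_closed P) (del_gt0 : 0 < del).
Local Notation ks := (enum 'I_n).
Implicit Types (k l : 'I_n) (a : mindex n -> V).

(* Keeping the elements of [P] makes [approx] fix [0] and [P]; killing the
   small ones makes it preserve strict convergence. *)
Definition approx (x : V) : V :=
  if x \in P then x else if nrm x < del then 0
  else xget 0 [set y | y \in P /\ nrm (x - y) < del].

Lemma approx_mem x : approx x \in P.
Proof.
have [P0 _ _] := P_closed; rewrite /approx; case: ifP => // _; case: ifP => // _.
by case: xgetP => [y _ []|].
Qed.

Lemma approx_id x : x \in P -> approx x = x.
Proof. by rewrite /approx => ->. Qed.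

Lemma approx0 : approx 0 = 0.
Proof. by have [P0 _ _] := P_closed; apply: approx_id. Qed.

Lemma approx_close x :
  (exists2 y, y \in P & nrm (x - y) < del) -> nrm (x - approx x) < del.
Proof.
case=> y yP xy; rewrite /approx; case: ifP => _; first by rewrite subrr nrm0.
case: ifP => [|_]; first by rewrite subr0.
by case: xgetP => [z _ [] //|/(_ y)[]].
Qed.

Lemma dec_approx a : dec a -> dec (fun I => approx (a I)).
Proof.
move=> a0 e e_gt0.
have [M aM] : exists M, forall I, (M <= mdeg I)%N -> nrm (a I) < Num.min e del.
  by apply: a0; rewrite lt_min e_gt0.
exists M => I /aM; rewrite lt_min => /andP[aIe aIdel].
by rewrite /approx; case: ifP => // _; rewrite aIdel nrm0.
Qed.

Definition approx_series (a : mindex n -> V) : mindex n -> V :=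
  uncoords ks (fun I => approx (coords ks a I)).

Lemma dec_approx_series a : dec a -> dec (approx_series a).
Proof. by move=> a0; apply/dec_uncoords/dec_approx/dec_coords. Qed.

Lemma approx_series_mem a I : dec a -> approx_series a I \in P.
Proof.
move=> a0; apply: uncoords_mem => // [|J]; last exact: approx_mem.
exact/dec_approx/dec_coords.
Qed.

Lemma approx_series_id a : dec a -> (forall I, a I \in P) -> approx_series a = a.
Proof.
move=> a0 aP; rewrite /approx_series.
under eq_fun do rewrite approx_id ?(coords_mem _ P_closed a0 aP) //.
exact: uncoords_coords.
Qed.

Lemma approx_series_close a : dec a ->
  (forall I, exists2 y, y \in P & nrm (coords ks a I - y) < del) ->
  forall I, nrm (a I - approx_series a I) < del.
Proof.
move=> a0 close I; have c0 := dec_coords ks a0.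
rewrite -{1}(uncoords_coords ks a0) /approx_series.
rewrite -[_ - _]/((fun I => _) I) -uncoordsB.
apply: (uncoords_mem _ (series_closed_ball del_gt0)) => [|J].
  exact: strictly_convergentB c0 (dec_approx c0).
by rewrite inE approx_close.
Qed.

Lemma approx_series_along k X c a :
  tail_local X -> (forall u, tails (X u) = const_coord c (tails u)) ->
  (forall l a, l != k -> dec a ->
     along l tails (along k X a) = along k X (along l tails a)) ->
  dec a -> along k X (approx_series a) = approx_series (along k X a).
Proof.
move=> X_local tails_X X_tails a0; rewrite /approx_series.
have uks : uniq ks := enum_uniq _; have kks : k \in ks := mem_enum _ k.
rewrite -(uncoords_subst X_local tails_X X_tails) //; last exact/dec_approx/dec_coords.
by rewrite (coords_subst tails_X X_tails) // along_select_map // approx0.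
Qed.

Lemma approx_series_subst0 k a : dec a ->
  subst0 k (approx_series a) = approx_series (subst0 k a).
Proof.
rewrite !subst0E; apply: approx_series_along => [||l b lk _].
- by apply: select_local => m /eqP ->.
- exact: tails_at_zero.
- by apply: alongC => [|I]; [rewrite eq_sym | apply: select_commute tails0].
Qed.

Lemma approx_series_subst1 k a : dec a ->
  subst1 nrm k (approx_series a) = approx_series (subst1 nrm k a).
Proof.
rewrite !subst1E; apply: approx_series_along => [||l b lk b0].
- exact: at_one_local.
- exact: tails_at_one.
- apply: alongC => [|I]; first by rewrite eq_sym.
  by apply/tails_at_one_commute/null2_slice; rewrite // eq_sym.
Qed.

End Approximation.
End Ultrametric.

Lemma eventually_forall_fin (T : finType) (Q : T -> nat -> Prop) :
  (forall t, exists h0, forall h, (h0 <= h)%N -> Q t h) ->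
  exists h0, forall h, (h0 <= h)%N -> forall t, Q t h.
Proof.
move=> Qt; suff [h0 h0Q] : exists h0, forall h, (h0 <= h)%N ->
    forall t, t \in enum T -> Q t h.
  by exists h0 => h h0h t; apply: h0Q; rewrite ?mem_enum.
elim: (enum T) => [|t ts [h0 h0Q]]; first by exists 0%N.
have [h1 h1Q] := Qt t; exists (maxn h0 h1) => h; rewrite geq_max => /andP[h0h h1h] t'.
by rewrite inE => /predU1P[->|t'ts]; [apply: h1Q | apply: h0Q].
Qed.

Section Levels.
Variables (Rr : realType) (V : zmodType) (nrm : V -> Rr) (n : nat).
Variable Rsub : nat -> {pred V}.
Hypothesis Rsub_nested : nested Rsub.

Lemma nested_mem h h' x : (h <= h')%N -> x \in Rsub h -> x \in Rsub h'.
Proof.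
move=> /subnK <-; elim: (h' - h)%N => [|d IH] // xh.
by rewrite addSn; apply/Rsub_nested/IH.
Qed.

Lemma tate_level (T : finType) (b : T -> mindex n -> V) :
  exists h0, forall h, (h0 <= h)%N -> forall t,
    (exists h', in_tate nrm (Rsub h') (b t)) -> forall I, b t I \in Rsub h.
Proof.
apply: eventually_forall_fin => t.
have [[h' [_ bh']]|no_level] := pselect (exists h', in_tate nrm (Rsub h') (b t)).
  by exists h' => h h'h _ I; apply: nested_mem h'h (bh' I).
by exists 0%N => h _ /no_level.
Qed.

Hypotheses (Rsub0 : forall h, 0 \in Rsub h) (Rsub_dense : dense_union nrm Rsub).

Lemma approx_level (T : finType) (a : T -> mindex n -> V) del : 0 < del ->
  (forall t, strictly_convergent nrm (a t)) ->
  exists h0, forall h, (h0 <= h)%N ->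
    forall t I, exists2 y, y \in Rsub h & nrm (a t I - y) < del.
Proof.
move=> del_gt0 a0.
have [M /(_ M (leqnn M)) aM] : exists M, forall M', (M <= M')%N ->
    forall t I, (M' <= mdeg I)%N -> nrm (a t I) < del.
  apply: eventually_forall_fin => t; have [M aM] := a0 t del del_gt0.
  by exists M => M' MM' I M'I; apply/aM/(leq_trans MM').
have [h0 h0y] : exists h0, forall h, (h0 <= h)%N ->
    forall tf : T * {ffun 'I_n -> 'I_M}, exists2 y, y \in Rsub h &
      nrm (a tf.1 [ffun k => nat_of_ord (tf.2 k)] - y) < del.
  apply: eventually_forall_fin => tf.
  have [h [y yh ay]] := Rsub_dense (a tf.1 [ffun k => nat_of_ord (tf.2 k)]) del_gt0.
  by exists h => h' hh'; exists y; first exact: nested_mem yh.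
exists h0 => h h0h t I; case: (leqP M (mdeg I)) => [MI|IM].
  by exists 0; rewrite ?Rsub0 // subr0 aM.
pose f : {ffun 'I_n -> 'I_M} :=
  [ffun k => Ordinal (leq_ltn_trans (leq_mdeg I k) IM)].
have -> : I = [ffun k => nat_of_ord (f k)] by apply/ffunP => k; rewrite !ffunE.
exact: (h0y h h0h (t, f)).
Qed.

End Levels.

Lemma gauss_norm_le (Rr : realType) (V : zmodType) (nrm : V -> Rr) n
    (a : mindex n -> V) e :
  (forall I, nrm (a I) <= e) -> gauss_norm nrm a <= e.
Proof.
by move=> ae; apply: ge_sup => [|_ [I _ <-]]; first by exists (nrm (a 0)), 0.
Qed.

Lemma banach_algebra_ultrametric (Rr : realType) (K : fieldType)
    (absK : K -> Rr) (R : algType K) (normR : R -> Rr) :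
  nonarch_complete_field absK -> banach_algebra absK normR -> ultrametric_norm normR.
Proof.
case=> absK_ge0 absK_eq0 absKM _ _ [normR_ge0 [normR_eq0 normRD _ normRZ _]].
have absK1 : absK 1 = 1.
  have /mulIf : absK 1 != 0 by apply/eqP => /absK_eq0/eqP; rewrite oner_eq0.
  by apply; rewrite -absKM !mul1r.
have absKN1 : absK (-1) = 1.
  by apply/eqP; rewrite -sqrp_eq1 ?absK_ge0 // expr2 -absKM mulrNN mulr1 absK1.
by split=> // x; rewrite -scaleN1r normRZ absKN1 mul1r.
Qed.

Lemma complete_subring_series_closed (Rr : realType) (R : nzRingType)
    (normR : R -> Rr) (P : {pred R}) :
  ultrametric_norm normR -> complete_subring normR P -> series_closed normR P.
Proof.
move=> nrmU [P1 PB _ P_complete].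
by apply: complete_subgroup_series_closed => //; rewrite -(subrr 1) PB.
Qed.

Theorem propositionA6 (Rr : realType) (K : fieldType) (absK : K -> Rr)
    (R : algType K) (normR : R -> Rr) (Rsub : nat -> {pred R})
    (n N : nat) (s : 'I_N -> mindex n -> R) :
  nonarch_complete_field absK ->
  banach_algebra absK normR ->
  (forall h, complete_subring normR (Rsub h)) ->
  nested Rsub ->
  dense_union normR Rsub ->
  (forall alpha, strictly_convergent normR (s alpha)) ->
  forall eps : Rr, 0 < eps ->
  exists (h : nat) (st : 'I_N -> mindex n -> R),
    [/\ forall alpha, in_tate normR (Rsub h) (st alpha),
        forall alpha, gauss_norm normR (fun I => s alpha I - st alpha I) < eps,
        forall alpha beta (k : 'I_n),
          subst0 k (s alpha) = subst0 k (s beta) ->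
          subst0 k (st alpha) = subst0 k (st beta),
        forall alpha beta (k : 'I_n),
          subst1 normR k (s alpha) = subst1 normR k (s beta) ->
          subst1 normR k (st alpha) = subst1 normR k (st beta)
      & forall alpha (k : 'I_n), nat_of_ord k = 0%N ->
          (exists h' : nat, in_tate normR (Rsub h') (subst1 normR k (s alpha))) ->
          subst1 normR k (st alpha) = subst1 normR k (s alpha)].
Proof.
move=> K_nonarch R_banach Rsub_complete Rsub_nested Rsub_dense s0 eps eps_gt0.
have nrmU := banach_algebra_ultrametric K_nonarch R_banach.
have [_ [_ _ _ _ R_complete]] := R_banach.
have Rsub_closed h := complete_subring_series_closed nrmU (Rsub_complete h).
have Rsub0 h : 0 \in Rsub h by have [] := Rsub_closed h.
pose del := eps / 2.
have del_gt0 : 0 < del by rewrite divr_gt0.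
have [h1 coords_approx] := approx_level Rsub_nested Rsub0 Rsub_dense del_gt0
  (fun alpha => dec_coords nrmU R_complete (enum 'I_n) (s0 alpha)).
have [h2 subst1_level] :=
  tate_level normR Rsub_nested (fun t : 'I_N * 'I_n => subst1 normR t.2 (s t.1)).
pose h := maxn h1 h2.
exists h, (fun alpha => approx_series normR (Rsub h) del (s alpha)); split.
- by move=> alpha; split=> [|I];
    [apply: dec_approx_series | apply: approx_series_mem].
- move=> alpha; apply: le_lt_trans (_ : del < eps); last first.
    by rewrite ltr_pdivrMr // ltr_pMr // ltr1n.
  apply: gauss_norm_le => I; apply/ltW/approx_series_close => // J.
  exact: coords_approx (leq_maxl _ _) _ _.
- by move=> alpha beta k s_eq; rewrite !approx_series_subst0 // s_eq.
- by move=> alpha beta k s_eq; rewrite !approx_series_subst1 // s_eq.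
(* Property (4) holds for every variable, not only the first one. *)
- move=> alpha k _ /(subst1_level h (leq_maxr _ _) (alpha, k)) s1P.
  rewrite approx_series_subst1 // approx_series_id //.
  by rewrite subst1E; apply: dec_along => //; apply: at_one_local.
Qed.
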